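(* Let $h>0$ and $v\in AC([0,2\pi))$ with $v_s\in TV([0,2\pi))$. Then there exists at most one weak solution $u\in AC([0,2\pi))$ with $u_s\in TV$ and $u(0)+\frac12(2\pi)^2=u(2\pi)$ of $$u-v\in h\frac{d}{ds}\partial J(u_s).$$ Here a weak solution is one for which there is $\omega\in W^1_1([0,2\pi))$ with $\omega(x)\in\partial J(u_s(x))$ and $u-v=h\,\omega_s$.
   Context: Let $$J(\varphi)=\frac{\pi}{4}\Big(|\varphi-\tfrac{3\pi}{4}|+|\varphi-\tfrac{\pi}{4}|+|\varphi+\tfrac{\pi}{4}|+|\varphi+\tfrac{3\pi}{4}|\Big),$$ with subdifferential $\partial J$. *)

From HB Require Import structures.
From mathcomp Require Import all_boot all_order all_algebra.
From mathcomp Require Import all_classical all_reals all_analysis.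
Set Implicit Arguments. Unset Strict Implicit. Unset Printing Implicit Defensive.
Import Order.TTheory GRing.Theory Num.Theory.
Import numFieldNormedType.Exports.
Local Open Scope classical_set_scope.
Local Open Scope ring_scope.

Definition J {R : realType} (phi : R) : R :=
  pi / 4 * (`|phi - 3 * pi / 4| + `|phi - pi / 4| + `|phi + pi / 4|
            + `|phi + 3 * pi / 4|).

Definition subdiffJ {R : realType} (phi p : R) : Prop :=
  forall psi : R, J phi + p * (psi - phi) <= J psi.

Definition abs_continuous {R : realType} (a b : R) (f : R -> R) : Prop :=
  forall e : R, 0 < e -> exists2 d : R, 0 < d &
    forall (n : nat) (x y : nat -> R),
      (forall i, (i < n)%N -> a <= x i /\ x i <= y i /\ y i <= b) ->
      (forall i j, (i < n)%N -> (j < n)%N -> i <> j ->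
         y i <= x j \/ y j <= x i) ->
      \sum_(i < n) (y i - x i) < d ->
      \sum_(i < n) `|f (y i) - f (x i)| < e.

Definition deriv_BV {R : realType} (a b : R) (f : R -> R) : Prop :=
  exists g : R -> R, bounded_variation a b g /\
    {ae (@lebesgue_measure R), forall x, x \in `[a, b] ->
       derivable f x 1 /\ derive1 f x = g x}.

(* weak solution of  u - v \in h d/ds \partial J(u_s)  on the periodic
   interval [0, 2pi): there is omega in W^1_1([0,2pi)) (absolutely
   continuous and 2pi-periodic, i.e. omega 0 = omega (2pi)) with
   omega(x) \in \partial J(u_s(x)) and u - v = h omega_s a.e. *)
Definition weak_solution {R : realType} (h : R) (v u : R -> R) : Prop :=
  exists omega : R -> R,
    abs_continuous 0 (2 * pi) omega /\ omega 0 = omega (2 * pi) /\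
    {ae (@lebesgue_measure R), forall x, x \in `[0, 2 * pi] ->
       derivable u x 1 /\ derivable omega x 1 /\
       subdiffJ (derive1 u x) (omega x) /\
       u x - v x = h * derive1 omega x}.

(* Let [omega1], [omega2] witness that [u1], [u2] are weak
   solutions.  Then [F = (u1 - u2) (omega1 - omega2)] is absolutely continuous
   and, a.e.,
     [F' = (u1 - u2)_s (omega1 - omega2) + (u1 - u2) (omega1 - omega2)_s
         >= (u1 - u2)^2 / h],
   since the subdifferential of [J] is monotone and
   [u1 - u2 = h (omega1 - omega2)_s].  The boundary conditions give
   [F (2 pi) = F 0], so [F] cannot increase strictly anywhere, whence
   [u1 = u2].  That an absolutely continuous function with a.e. nonnegative
   derivative is nondecreasing is proved by a gauge (Cousin) argument: cover
   the exceptional null set by an open set of small measure; off that set the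
   derivative controls the decrease, on it absolute continuity does. *)

From HB Require Import structures.
From mathcomp Require Import all_boot all_order all_algebra.
From mathcomp Require Import all_classical all_reals all_analysis.
From mathcomp Require Import ring lra measurable_realfun.
Import Order.TTheory GRing.Theory Num.Theory.
Import numFieldNormedType.Exports.
Local Open Scope classical_set_scope.
Local Open Scope ring_scope.
Set Implicit Arguments.
Unset Strict Implicit.

Section real_analysis.
Variable R : realType.
Implicit Types (a b c k : R) (f g w : R -> R).

Lemma derive1_approx f t e : derivable f t 1 -> 0 < e ->
  exists2 r : R, 0 < r & forall y, `|y - t| < r ->
    `|f y - f t - derive1 f t * (y - t)| <= e * `|y - t|.
Proof.
move=> /cvgrPdist_le /(_ e) + e_gt0; rewrite derive1E => /(_ e_gt0).
move=> /nbhs_ballP[r r_gt0 near_t]; exists r => // y yt_r.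
have [->|yt] := eqVneq y t; first by rewrite !subrr !(mulr0, subrr, normr0).
have yt0 : y - t != 0 by rewrite subr_eq0.
have := near_t (y - t); rewrite /ball /= sub0r normrN => /(_ yt_r yt0).
rewrite -/('D_1 f t) /GRing.scale /= mulr1 subrK => le_e.
have -> : f y - f t - 'D_1 f t * (y - t) =
    - ((y - t) * ('D_1 f t - (y - t)^-1 * (f y - f t))) by field.
by rewrite normrN normrM mulrC ler_wpM2r.
Qed.

Lemma derive1_mul f g x : derivable f x 1 -> derivable g x 1 ->
  derive1 (f * g) x = f x * derive1 g x + g x * derive1 f x.
Proof. by move=> df dg; rewrite !derive1E (deriveM df dg). Qed.

Lemma derive1_sub f g x : derivable f x 1 -> derivable g x 1 ->
  derive1 (f - g) x = derive1 f x - derive1 g x.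
Proof. by move=> df dg; rewrite !derive1E (deriveB df dg). Qed.

Lemma derive1_scale_id k x : derive1 (k \*: (@id R)) x = k.
Proof.
rewrite derive1E deriveZ; last exact: derivable_id.
by rewrite derive_id; apply: mulr1.
Qed.

(* Cousin's lemma, phrased as an induction principle along [[a, b]]. *)
Lemma gauge_induction a b (P : R -> Prop) (fine : R -> R -> Prop) :
  a <= b -> P a ->
  (forall y z, a <= y -> y <= z -> z <= b -> P y -> fine y z -> P z) ->
  (forall t, a <= t -> t <= b -> exists2 r : R, 0 < r &
     forall y z, a <= y -> z <= b -> t - r < y -> y <= t -> t <= z ->
       z < t + r -> fine y z) ->
  P b.
Proof.
move=> ab Pa step gauge.
pose S := [set x | a <= x /\ x <= b /\ P x].
have supS : has_sup S.
  split; first by exists a; split; rewrite ?lexx.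
  by exists b => x [_ []].
set s := sup S.
have a_s : a <= s by apply: sup_upper_bound => //; split; rewrite ?lexx.
have s_b : s <= b by apply: ge_sup; [case: supS|move=> x [_ []]].
have [r r_gt0 fine_s] := gauge s a_s s_b.
have [x [ax [xb Px]] sx] := sup_adherent r_gt0 supS.
have x_s : x <= s by apply: sup_upper_bound.
have Ps : P s by apply: (step x s) => //; apply: fine_s => //; rewrite ?lexx //; lra.
have [s_lt_b|b_s] := ltP s b; last first.
  by have -> : b = s by apply/eqP; rewrite eq_le b_s s_b.
pose z := Num.min b (s + r / 2).
have s_z : s < z by rewrite lt_min s_lt_b /=; lra.
have z_b : z <= b by rewrite ge_min lexx.
have Pz : P z.
  apply: (step x z) => //; first lra.
  by apply: fine_s => //; try lra; rewrite gt_min; apply/orP; right; lra.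
have : z <= s by apply: sup_upper_bound => //; split; [lra|split].
lra.
Qed.

Definition intervals_within a b n (x y : nat -> R) :=
  forall i, (i < n)%N -> a <= x i /\ x i <= y i /\ y i <= b.

Definition nonoverlapping n (x y : nat -> R) :=
  forall i j, (i < n)%N -> (j < n)%N -> i <> j -> y i <= x j \/ y j <= x i.

Lemma intervals_withinW a a' b b' n x y : a' <= a -> b <= b' ->
  intervals_within a b n x y -> intervals_within a' b' n x y.
Proof. by move=> a'a bb' within i /within; lra. Qed.

Lemma abs_continuous_subitv a b a' b' f :
  a <= a' -> b' <= b -> abs_continuous a b f -> abs_continuous a' b' f.
Proof.
move=> aa' b'b acf e e_gt0; have [d d_gt0 acf_d] := acf e e_gt0.
by exists d => // n x y within; apply: acf_d; exact: (intervals_withinW aa' b'b).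
Qed.

Lemma abs_continuous_dist a b f e : abs_continuous a b f -> 0 < e ->
  exists2 d : R, 0 < d & forall x y, a <= x -> x <= y -> y <= b ->
    y - x < d -> `|f y - f x| < e.
Proof.
move=> acf e_gt0; have [d d_gt0 acf_d] := acf e e_gt0.
exists d => // x y ax xy yb yx_d.
have := acf_d 1%N (fun=> x) (fun=> y); rewrite !big_ord1; apply => //.
by move=> i j; rewrite !ltnS !leqn0 => /eqP -> /eqP ->.
Qed.

Lemma abs_continuous_add a b f g : abs_continuous a b f -> abs_continuous a b g ->
  abs_continuous a b (fun x => f x + g x).
Proof.
move=> acf acg e e_gt0; have e2_gt0 : 0 < e / 2 by rewrite divr_gt0.
have [d1 d1_gt0 acf_d1] := acf _ e2_gt0; have [d2 d2_gt0 acg_d2] := acg _ e2_gt0.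
exists (Num.min d1 d2) => [|n x y within disj]; first by rewrite lt_min d1_gt0.
rewrite lt_min => /andP[/(acf_d1 n x y within disj) Sf /(acg_d2 n x y within disj) Sg].
suff : \sum_(i < n) `|f (y i) + g (y i) - (f (x i) + g (x i))| <=
       \sum_(i < n) `|f (y i) - f (x i)| + \sum_(i < n) `|g (y i) - g (x i)| by lra.
rewrite -big_split /=; apply: ler_sum => i _.
by rewrite opprD addrACA; exact: ler_normD.
Qed.

Lemma abs_continuous_opp a b f : abs_continuous a b f ->
  abs_continuous a b (fun x => - f x).
Proof.
move=> acf e e_gt0; have [d d_gt0 acf_d] := acf e e_gt0.
exists d => // n x y within disj S.
rewrite (eq_bigr (fun i : 'I_n => `|f (y i) - f (x i)|)); first exact: acf_d.
by move=> i _; rewrite -opprD normrN.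
Qed.

Lemma abs_continuous_sub a b f g : abs_continuous a b f -> abs_continuous a b g ->
  abs_continuous a b (fun x => f x - g x).
Proof. by move=> acf /abs_continuous_opp; exact: abs_continuous_add. Qed.

Lemma abs_continuous_scale_id a b k : abs_continuous a b (fun x => k * x).
Proof.
move=> e e_gt0; have k1_gt0 : 0 < `|k| + 1 by rewrite ltr_wpDl.
exists (e / (`|k| + 1)) => [|n x y within _]; first by rewrite divr_gt0.
rewrite ltr_pdivlMr // => S.
rewrite (eq_bigr (fun i : 'I_n => `|k| * (y i - x i))); last first.
  move=> i _; have [_ [xy _]] := within i (ltn_ord i).
  by rewrite -mulrBr normrM (ger0_norm (x := y i - x i)) // subr_ge0.
have S_ge0 : 0 <= \sum_(i < n) (y i - x i).
  by apply: sumr_ge0 => i _; have [_ [? _]] := within i (ltn_ord i); rewrite subr_ge0.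
rewrite -mulr_sumr.
have : `|k| * \sum_(i < n) (y i - x i) <= (`|k| + 1) * \sum_(i < n) (y i - x i).
  by rewrite ler_wpM2r // lerDl.
lra.
Qed.

Lemma abs_continuous_bounded a b f : a <= b -> abs_continuous a b f ->
  exists M : R, forall x, a <= x -> x <= b -> `|f x| <= M.
Proof.
move=> ab acf.
pose P t := exists M : R, forall x, a <= x -> x <= t -> `|f x| <= M.
suff [M bound] : P b by exists M.
pose fine y z := forall x, y <= x -> x <= z -> `|f x - f y| <= 1.
apply: (gauge_induction (P := P) (fine := fine) ab).
- exists `|f a| => x ax xa; have -> : x = a by apply/eqP; rewrite eq_le xa ax.
  by rewrite lexx.
- move=> y z ay yz zb [M bound] fine_yz; exists (M + 1) => x ax xz.
  have [xy|yx] := leP x y; first by have := bound x ax xy; lra.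
  have := fine_yz x (ltW yx) xz; have := bound y ay (lexx y).
  have := ler_normD (f x - f y) (f y); rewrite subrK; lra.
- move=> t at_ tb; have [d d_gt0 acf_d] := abs_continuous_dist acf ltr01.
  exists (d / 2) => [|y z ay zb ty yt tz zt x yx xz]; first by rewrite divr_gt0.
  by apply: ltW; apply: acf_d => //; lra.
Qed.

Lemma abs_continuous_mul a b f g : a <= b ->
  abs_continuous a b f -> abs_continuous a b g ->
  abs_continuous a b (fun x => f x * g x).
Proof.
move=> ab acf acg.
have [Mf bound_f] := abs_continuous_bounded ab acf.
have [Mg bound_g] := abs_continuous_bounded ab acg.
pose M := `|Mf| + `|Mg| + 1.
have M_gt0 : 0 < M by rewrite /M ltr_wpDl // addr_ge0.
have bound_f' x : a <= x -> x <= b -> `|f x| <= M.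
  move=> ax xb; have := bound_f x ax xb; have := ler_norm Mf.
  have : 0 <= `|Mg| by []; rewrite /M; lra.
have bound_g' x : a <= x -> x <= b -> `|g x| <= M.
  move=> ax xb; have := bound_g x ax xb; have := ler_norm Mg.
  have : 0 <= `|Mf| by []; rewrite /M; lra.
move=> e e_gt0; have eM_gt0 : 0 < e / (2 * M) by rewrite divr_gt0 // mulr_gt0.
have [d1 d1_gt0 acf_d1] := acf _ eM_gt0; have [d2 d2_gt0 acg_d2] := acg _ eM_gt0.
exists (Num.min d1 d2) => [|n x y within disj]; first by rewrite lt_min d1_gt0.
rewrite lt_min => /andP[/(acf_d1 n x y within disj) Sf /(acg_d2 n x y within disj) Sg].
have : \sum_(i < n) `|f (y i) * g (y i) - f (x i) * g (x i)| <=
    M * \sum_(i < n) `|f (y i) - f (x i)| + M * \sum_(i < n) `|g (y i) - g (x i)|.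
  rewrite !mulr_sumr -big_split /=; apply: ler_sum => i _.
  have [? [? ?]] := within i (ltn_ord i).
  have -> : f (y i) * g (y i) - f (x i) * g (x i) =
      (f (y i) - f (x i)) * g (y i) + f (x i) * (g (y i) - g (x i)) by ring.
  apply: (le_trans (ler_normD _ _)); rewrite !normrM.
  apply: lerD.
  - by rewrite mulrC; apply: ler_wpM2r => //; apply: bound_g'; lra.
  - by apply: ler_wpM2r => //; apply: bound_f'; lra.
have -> : e = 2 * (M * (e / (2 * M))) by field; rewrite gt_eqF.
rewrite -(ltr_pM2l M_gt0) in Sf; rewrite -(ltr_pM2l M_gt0) in Sg.
lra.
Qed.

Lemma derive1_ge0_almost_nondecreasing f t eps : derivable f t 1 ->
  0 <= derive1 f t -> 0 < eps -> exists2 r : R, 0 < r &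
    forall y z, t - r < y -> y <= t -> t <= z -> z < t + r ->
      f y - eps * (z - y) <= f z.
Proof.
move=> df f't_ge0 eps_gt0; have [r r_gt0 approx] := derive1_approx df eps_gt0.
exists r => // y z ty yt tz zt.
have := approx z; have := approx y.
rewrite (ler0_norm (x := y - t)); last lra.
rewrite (ger0_norm (x := z - t)); last lra.
move=> /(_ ltac:(lra)) /ler_normlP[_ approx_y] /(_ ltac:(lra)) /ler_normlP[approx_z _].
have : 0 <= derive1 f t * (z - t) by rewrite mulr_ge0 // subr_ge0.
have : 0 <= derive1 f t * (t - y) by rewrite mulr_ge0 // subr_ge0.
have : derive1 f t * (y - t) = - (derive1 f t * (t - y)) by ring.
have : eps * - (y - t) = eps * (t - y) by ring.
have : eps * (z - y) = eps * (z - t) + eps * (t - y) by ring.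
lra.
Qed.

Definition extend_seq n (s : nat -> R) (x : R) i := if i == n then x else s i.

Lemma sum_extend_seq (F : R -> R -> R) n xs ys y z :
  \sum_(i < n.+1) F (extend_seq n xs y i) (extend_seq n ys z i) =
  \sum_(i < n) F (xs i) (ys i) + F y z.
Proof.
rewrite big_ord_recr /= /extend_seq eqxx; congr (_ + _).
by apply: eq_bigr => i _; rewrite (ltn_eqF (ltn_ord i)).
Qed.

Lemma intervals_within_extend a y z n xs ys : a <= y -> y <= z ->
  intervals_within a y n xs ys ->
  intervals_within a z n.+1 (extend_seq n xs y) (extend_seq n ys z).
Proof.
move=> ay yz within i; rewrite ltnS leq_eqVlt /extend_seq => /orP[/eqP ->|ilt].
  by rewrite eqxx.
by rewrite (ltn_eqF ilt); have := within i ilt; lra.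
Qed.

Lemma nonoverlapping_extend a y z n xs ys : intervals_within a y n xs ys ->
  nonoverlapping n xs ys ->
  nonoverlapping n.+1 (extend_seq n xs y) (extend_seq n ys z).
Proof.
move=> within disj i j; rewrite !ltnS /extend_seq (leq_eqVlt i) (leq_eqVlt j).
move=> /orP[/eqP ->|ilt] /orP[/eqP ->|jlt] ij.
- by case: ij.
- by rewrite eqxx (ltn_eqF jlt); right; have := within j jlt; lra.
- by rewrite eqxx (ltn_eqF ilt); left; have := within i ilt; lra.
- by rewrite (ltn_eqF ilt) (ltn_eqF jlt); exact: disj.
Qed.

Local Notation mu := (@lebesgue_measure R).

#[local] Instance ae_lebesgue_filter : Filter (almost_everywhere mu) :=
  ae_filter_ringOfSetsType mu.

Section decrease_outside_open_set.
Variables (a b eps : R) (f : R -> R) (U : set R).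
Hypotheses (eps_gt0 : 0 < eps) (openU : open U).
Hypothesis derive1_ge0 : forall t, a <= t -> t <= b -> ~ U t ->
  derivable f t 1 /\ 0 <= derive1 f t.

(* [reached x]: up to a slope [-eps], the only decrease of [f] on [[a, x]] is
   across finitely many non-overlapping intervals that fill at most the part of
   [[a, x[] lying in [U]. *)
Let reached x := exists n xs ys, [/\ intervals_within a x n xs ys,
  nonoverlapping n xs ys,
  ((\sum_(i < n) (ys i - xs i))%:E <= mu (U `&` `[a, x[))%E &
  f a - eps * (x - a) - \sum_(i < n) `|f (ys i) - f (xs i)| <= f x].

Let fine y z := f y - eps * (z - y) <= f z \/ (forall x, y <= x -> x <= z -> U x).

Let measurable_U_itv x : measurable (U `&` `[a, x[).
Proof. by apply: measurableI; [exact: open_measurable|exact: measurable_itv]. Qed.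

Let measure_U_itv_le y z : y <= z -> (mu (U `&` `[a, y[) <= mu (U `&` `[a, z[))%E.
Proof.
move=> yz; apply: le_measure; rewrite ?inE; [exact: measurable_U_itv..|].
by move=> x [Ux]; rewrite /= !in_itv /= => /andP[ax xy]; split => //; rewrite ax /=; lra.
Qed.

Let measure_U_itv_extend y z : a <= y -> y < z -> (forall x, y <= x -> x <= z -> U x) ->
  (mu (U `&` `[a, y[) + (z - y)%:E <= mu (U `&` `[a, z[))%E.
Proof.
move=> ay yz Uyz; have disjoint : U `&` `[a, y[ `&` `[y, z[ = set0.
  apply/seteqP; split => // x [[_]]; rewrite /= !in_itv /=.
  by move=> /andP[_ xy] /andP[yx _]; lra.
have -> : (z - y)%:E = mu `[y, z[.
  by rewrite lebesgue_measure_itv /= lte_fin yz EFinB.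
rewrite -(measureU mu (measurable_U_itv y) (measurable_itv `[y, z[) disjoint).
apply: le_measure; rewrite ?inE; [|exact: measurable_U_itv|].
  exact: measurableU (measurable_U_itv y) (measurable_itv _).
move=> x [[Ux]|]; rewrite /= !in_itv /= => /andP[x1 x2].
  by split => //; rewrite x1 /=; lra.
by split; [apply: Uyz; lra|apply/andP; split; lra].
Qed.

Let reached_step y z : a <= y -> y <= z -> reached y -> fine y z -> reached z.
Proof.
move=> ay yz [n [xs [ys [within disj length decrease]]]].
have [<-|yz'] := eqVneq y z; first by exists n, xs, ys.
have {yz yz'} yz : y < z by rewrite lt_neqAle yz' yz.
case=> [slope|covered].
  exists n, xs, ys; split => //.
  - by apply: intervals_withinW within => //; lra.
  - by apply: le_trans length _; apply: measure_U_itv_le; lra.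
  - lra.
exists n.+1, (extend_seq n xs y), (extend_seq n ys z); split.
- by apply: intervals_within_extend => //; lra.
- exact: nonoverlapping_extend within disj.
- rewrite (sum_extend_seq (fun x y => y - x)) EFinD.
  by apply: le_trans (measure_U_itv_extend ay yz covered); exact: leeD.
- rewrite (sum_extend_seq (fun x y => `|f y - f x|)).
  have := ler_norm (f y - f z); rewrite distrC.
  have : 0 <= eps * (z - y) by rewrite mulr_ge0 ?subr_ge0 //; [exact: ltW|lra].
  lra.
Qed.

Let fine_gauge t : a <= t -> t <= b -> exists2 r : R, 0 < r &
  forall y z, a <= y -> z <= b -> t - r < y -> y <= t -> t <= z ->
    z < t + r -> fine y z.
Proof.
move=> at_ tb; have [Ut|notUt] := pselect (U t).
  have /nbhs_ballP[r /= r_gt0 ball_U] : nbhs t U by exact: openU.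
  exists r => // y z _ _ ty yt tz zt; right => x yx xz.
  by apply: ball_U; rewrite /ball /= ltr_norml; apply/andP; split; lra.
have [df f't_ge0] := derive1_ge0 at_ tb notUt.
have [r r_gt0 incr] := derive1_ge0_almost_nondecreasing df f't_ge0 eps_gt0.
by exists r => // y z _ _ ty yt tz zt; left; exact: incr.
Qed.

Lemma decrease_outside_open_set : a <= b -> exists n xs ys,
  [/\ intervals_within a b n xs ys, nonoverlapping n xs ys,
  ((\sum_(i < n) (ys i - xs i))%:E <= mu (U `&` `[a, b[))%E &
  f a - eps * (b - a) - \sum_(i < n) `|f (ys i) - f (xs i)| <= f b].
Proof.
move=> ab; apply: (gauge_induction (P := reached) (fine := fine) ab _ _ fine_gauge).
  exists 0%N, (fun=> 0), (fun=> 0); split => //.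
  - by rewrite big_ord0 measure_ge0.
  - by rewrite big_ord0 subrr mulr0 !subr0.
by move=> y z ay yz _; exact: reached_step.
Qed.

End decrease_outside_open_set.

Lemma ae_subitv a b a' b' (P : R -> Prop) : a <= a' -> b' <= b ->
  {ae mu, forall x, x \in `[a, b] -> P x} ->
  {ae mu, forall x, x \in `[a', b'] -> P x}.
Proof.
move=> aa' b'b; apply: filterS => x Px; rewrite in_itv /= => /andP[a'x xb'].
by apply: Px; rewrite in_itv /=; apply/andP; split; lra.
Qed.

Lemma abs_continuous_nondecreasing_eps a b f eps : a <= b -> 0 < eps ->
  abs_continuous a b f ->
  {ae mu, forall x, x \in `[a, b] -> derivable f x 1 /\ 0 <= derive1 f x} ->
  f a - eps * (b - a) - eps <= f b.
Proof.
move=> ab eps_gt0 acf derive1_ge0.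
have [d d_gt0 acf_d] := acf eps eps_gt0.
pose N := ~` [set x | x \in `[a, b] -> derivable f x 1 /\ 0 <= derive1 f x].
have d2_gt0 : 0 < d / 2 by rewrite divr_gt0.
have [U [openU NU muU]] := outer_measure_open_le N d2_gt0.
move: muU; rewrite (negligible_outer_measure _).1 // add0e => muU.
have derive1_ge0_off_U t : a <= t -> t <= b -> ~ U t ->
    derivable f t 1 /\ 0 <= derive1 f t.
  move=> at_ tb notUt; have /contrapT : ~ N t by move/NU.
  by apply; rewrite in_itv /= at_ tb.
have [n [xs [ys [within disj length decrease]]]] :=
  decrease_outside_open_set eps_gt0 openU derive1_ge0_off_U ab.
have : \sum_(i < n) (ys i - xs i) < d.
  suff : ((\sum_(i < n) (ys i - xs i))%:E <= (d / 2)%:E)%E by rewrite lee_fin; lra.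
  apply: (le_trans length); apply: le_trans muU.
  apply: le_measure; rewrite ?inE; last by move=> x [].
  - by apply: measurableI; [exact: open_measurable|exact: measurable_itv].
  - exact: open_measurable.
by move/(acf_d n xs ys within disj); lra.
Qed.

Lemma abs_continuous_nondecreasing a b f : a <= b -> abs_continuous a b f ->
  {ae mu, forall x, x \in `[a, b] -> derivable f x 1 /\ 0 <= derive1 f x} ->
  f a <= f b.
Proof.
move=> ab acf derive1_ge0; apply/ler_addgt0Pr => e e_gt0.
have l_gt0 : 0 < b - a + 1 by lra.
have := abs_continuous_nondecreasing_eps ab (divr_gt0 e_gt0 l_gt0) acf derive1_ge0.
have -> : f a - e / (b - a + 1) * (b - a) - e / (b - a + 1) = f a - e.
  by field; rewrite gt_eqF.
lra.
Qed.

Lemma abs_continuous_derive1_ge a b f k : a <= b -> abs_continuous a b f ->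
  {ae mu, forall x, x \in `[a, b] -> derivable f x 1 /\ k <= derive1 f x} ->
  f a + k * (b - a) <= f b.
Proof.
move=> ab acf derive1_ge.
have acg : abs_continuous a b (f - k \*: id).
  have -> : f - k \*: id = (fun x => f x - k * x) by apply/funext.
  exact: abs_continuous_sub acf (abs_continuous_scale_id a b k).
suff : (f - k \*: id) a <= (f - k \*: id) b by rewrite !fctE /= /GRing.scale /=; lra.
apply: abs_continuous_nondecreasing ab acg _; apply: filterS derive1_ge.
move=> x + /[dup] xab => /[apply] -[df k_le].
have dk : derivable (k \*: (@id R)) x 1 by apply: derivableZ; exact: derivable_id.
split; first exact: (derivableB df dk).
by rewrite (derive1_sub df dk) derive1_scale_id subr_ge0.
Qed.

Lemma abs_continuous_nonzero_near a b w x0 : a < b -> abs_continuous a b w ->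
  a <= x0 -> x0 <= b -> w x0 != 0 ->
  exists c p q, [/\ 0 < c, a <= p, p < q, q <= b &
    forall y, p <= y -> y <= q -> c <= w y ^+ 2].
Proof.
move=> ab acw ax0 x0b wx0; pose e := `|w x0| / 2.
have e_gt0 : 0 < e by rewrite divr_gt0 // normr_gt0.
have [d d_gt0 acw_d] := abs_continuous_dist acw e_gt0.
exists (e ^+ 2), (Num.max a (x0 - d / 2)), (Num.min b (x0 + d / 2)); split.
- exact: exprn_gt0.
- by rewrite le_max lexx.
- by rewrite gt_max !lt_min; apply/andP; split; apply/andP; split; lra.
- by rewrite ge_min lexx.
move=> y; rewrite ge_max le_min => /andP[ay x0y] /andP[yb yx0].
have near_x0 : `|w y - w x0| < e.
  have [yx|xy] := leP y x0; last by apply: acw_d => //; lra.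
  by rewrite distrC; apply: acw_d => //; lra.
have e_le : e <= `|w y|.
  have := ler_normD (w x0 - w y) (w y); rewrite subrK distrC.
  have : `|w x0| = 2 * e by rewrite /e; field.
  lra.
have := ler_pM (ltW e_gt0) (ltW e_gt0) e_le e_le.
by rewrite -!expr2 real_normK ?num_real.
Qed.

Lemma derive1_ge_sqr_eq0 a b c F w : a < b -> 0 < c ->
  abs_continuous a b F -> abs_continuous a b w ->
  {ae mu, forall x, x \in `[a, b] -> derivable F x 1 /\ c * w x ^+ 2 <= derive1 F x} ->
  F b <= F a -> forall x, x \in `[a, b] -> w x = 0.
Proof.
move=> ab c_gt0 acF acw derive1_ge Fba x0; rewrite in_itv /= => /andP[ax0 x0b].
apply/eqP/negPn/negP => wx0.
have [e [p [q [e_gt0 ap pq qb w_ge]]]] := abs_continuous_nonzero_near ab acw ax0 x0b wx0.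
have derive1_ge0 : {ae mu, forall x, x \in `[a, b] ->
    derivable F x 1 /\ 0 <= derive1 F x}.
  apply: filterS derive1_ge => x + xab => /(_ xab)[dF le_dF]; split => //.
  by apply: le_trans le_dF; rewrite mulr_ge0 ?sqr_ge0 // ltW.
have pb : p <= b by lra.
have aq : a <= q by lra.
have Fap : F a <= F p.
  apply: abs_continuous_nondecreasing ap (abs_continuous_subitv (lexx a) pb acF) _.
  exact: ae_subitv (lexx a) pb derive1_ge0.
have Fqb : F q <= F b.
  apply: abs_continuous_nondecreasing qb (abs_continuous_subitv aq (lexx b) acF) _.
  exact: ae_subitv aq (lexx b) derive1_ge0.
have Fpq : F p + c * e * (q - p) <= F q.
  apply: abs_continuous_derive1_ge (ltW pq) (abs_continuous_subitv ap qb acF) _.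
  apply: filterS (ae_subitv ap qb derive1_ge) => x + xpq => /(_ xpq)[dF le_dF].
  split => //; apply: le_trans le_dF; rewrite ler_pM2l //.
  by move: xpq; rewrite in_itv /= => /andP[px xq]; exact: w_ge.
have : 0 < c * e * (q - p) by rewrite !mulr_gt0 // subr_gt0.
lra.
Qed.

Lemma subdiffJ_monotone (phi psi p q : R) :
  subdiffJ phi p -> subdiffJ psi q -> 0 <= (p - q) * (phi - psi).
Proof.
move=> /(_ psi) sub_phi /(_ phi) sub_psi.
have -> : (p - q) * (phi - psi) = - (p * (psi - phi) + q * (phi - psi)) by ring.
lra.
Qed.

Lemma weak_solutions_energy_derive1 (a b h : R) (v u1 u2 om1 om2 : R -> R) :
  0 < h ->
  {ae mu, forall x, x \in `[a, b] -> derivable u1 x 1 /\ derivable om1 x 1 /\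
     subdiffJ (derive1 u1 x) (om1 x) /\ u1 x - v x = h * derive1 om1 x} ->
  {ae mu, forall x, x \in `[a, b] -> derivable u2 x 1 /\ derivable om2 x 1 /\
     subdiffJ (derive1 u2 x) (om2 x) /\ u2 x - v x = h * derive1 om2 x} ->
  {ae mu, forall x, x \in `[a, b] ->
     derivable ((u1 - u2) * (om1 - om2)) x 1 /\
     h^-1 * (u1 x - u2 x) ^+ 2 <= derive1 ((u1 - u2) * (om1 - om2)) x}.
Proof.
move=> h_gt0; apply: filterS2 => x sol1 sol2 xab.
have [du1 [dom1 [sub1 eq1]]] := sol1 xab.
have [du2 [dom2 [sub2 eq2]]] := sol2 xab.
have du : derivable (u1 - u2) x 1 by exact: (derivableB du1 du2).
have dom : derivable (om1 - om2) x 1 by exact: (derivableB dom1 dom2).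
split; first exact: (derivableM du dom).
rewrite (derive1_mul du dom) (derive1_sub du1 du2) (derive1_sub dom1 dom2) !fctE.
have := subdiffJ_monotone sub1 sub2.
have -> : u1 x - u2 x = h * (derive1 om1 x - derive1 om2 x).
  by rewrite -[u1 x](subrK (v x)) -[u2 x](subrK (v x)) eq1 eq2; ring.
have -> : h^-1 * (h * (derive1 om1 x - derive1 om2 x)) ^+ 2 =
    h * (derive1 om1 x - derive1 om2 x) * (derive1 om1 x - derive1 om2 x).
  by field; rewrite gt_eqF.
lra.
Qed.

End real_analysis.

Theorem lemma4p2 (R : realType) (h : R) (v : R -> R) :
  0 < h ->
  abs_continuous 0 (2 * pi) v -> deriv_BV 0 (2 * pi) v ->
  forall u1 u2 : R -> R,
    abs_continuous 0 (2 * pi) u1 -> deriv_BV 0 (2 * pi) u1 ->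
    u1 0 + 2^-1 * (2 * pi) ^+ 2 = u1 (2 * pi) ->
    weak_solution h v u1 ->
    abs_continuous 0 (2 * pi) u2 -> deriv_BV 0 (2 * pi) u2 ->
    u2 0 + 2^-1 * (2 * pi) ^+ 2 = u2 (2 * pi) ->
    weak_solution h v u2 ->
    forall x : R, x \in `[0, 2 * pi] -> u1 x = u2 x.
Proof.
move=> h_gt0 _ _ u1 u2 acu1 _ bc1 [om1 [acom1 [per1 sol1]]]
  acu2 _ bc2 [om2 [acom2 [per2 sol2]]] x x_in.
have T_gt0 : 0 < 2 * pi :> R by rewrite mulr_gt0 // pi_gt0.
apply/eqP; rewrite -subr_eq0; apply/eqP; move: x x_in.
have hV_gt0 : 0 < h^-1 by rewrite invr_gt0.
apply: (derive1_ge_sqr_eq0 (F := (u1 - u2) * (om1 - om2)) (w := fun x => u1 x - u2 x)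
  T_gt0 hV_gt0).
- apply: abs_continuous_mul (ltW T_gt0) _ _; exact: abs_continuous_sub.
- exact: abs_continuous_sub.
- exact: (weak_solutions_energy_derive1 h_gt0 sol1 sol2).
rewrite !fctE -bc1 -bc2 -per1 -per2.
by rewrite opprD addrACA subrr addr0.
Qed.
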